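(* Let $\Sigma\in\mathbb{R}^{N\times N}$ be symmetric positive definite, $\mathcal T$ a binary tree whose leaves are the assets $1,\dots,N$, and $\gamma\in[0,1]$. For all $\mu\in\mathbb{R}^N$ outside a Lebesgue-measure-zero subset of $\mathbb{R}^N$, the aggregate signal $s_n$ computed by the HRP-$\Sigma\mu$ algorithm is nonzero at every internal node $n$ of $\mathcal T$. In particular, the $L^1$ denominator $|\alpha_L^{\mathrm{raw}}|+|\alpha_R^{\mathrm{raw}}|$ is strictly positive at every internal node and the algorithm is well defined.
   Context: HRP-$\Sigma\mu$ algorithm (inputs $\Sigma,\mu,\mathcal T,\gamma$), defined recursively. At a leaf (asset $i$) return $\hat w=(1)$, $v=\Sigma_{ii}$, $s=\mu_i$. At an internal node $n$ with left and right subtrees having leaf index sets $L,R$: recursively obtain $(\hat w_L,v_L,s_L)$ and $(\hat w_R,v_R,s_R)$; set $c=\hat w_L^\top\Sigma_{LR}\hat w_R$, $\Delta=v_Lv_R-\gamma^2c^2$, $\alpha_L^{\mathrm{raw}}=(v_Rs_L-\gamma cs_R)/\Delta$, $\alpha_R^{\mathrm{raw}}=(v_Ls_R-\gamma cs_L)/\Delta$, $Z=|\alpha_L^{\mathrm{raw}}|+|\alpha_R^{\mathrm{raw}}|$, $\alpha_k=\alpha_k^{\mathrm{raw}}/Z$; the node representative is the stacked vector $\hat w_n=(\alpha_L\hat w_L,\alpha_R\hat w_R)\in\mathbb{R}^{L\cup R}$, with $v_n=\hat w_n^\top\Sigma_{nn}\hat w_n$ and $s_n=\hat w_n^\top\mu_n$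 (subscripts denote sub-blocks/subvectors on the node's index set). The output is the representative at the root. *)

From mathcomp Require Import all_boot all_order all_algebra.
From mathcomp Require Import reals.
Set Implicit Arguments. Unset Strict Implicit. Unset Printing Implicit Defensive.
Import Order.TTheory GRing.Theory Num.Theory.
Local Open Scope ring_scope.

(* Binary trees whose leaves are labelled by assets 'I_N (assets 1..N are
   indexed 0..N-1). *)
Inductive btree (N : nat) : Type :=
| Leaf of 'I_N
| Node of btree N & btree N.
Arguments Leaf {N}.
Arguments Node {N}.

Fixpoint leaves N (t : btree N) : seq 'I_N :=
  match t with Leaf i => [:: i] | Node l r => leaves l ++ leaves r end.

Definition tree_on_assets N (t : btree N) : Prop := perm_eq (leaves t) (enum 'I_N).

Fixpoint all_internal N (P : btree N -> Prop) (t : btree N) : Prop :=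
  match t with
  | Leaf _ => True
  | Node l r => P t /\ all_internal P l /\ all_internal P r
  end.

Definition sym_posdef (R : realFieldType) N (S : 'M[R]_N) : Prop :=
  S^T = S /\ forall x : 'cV[R]_N, x != 0 -> 0 < (x^T *m S *m x) 0 0.

Section HRP.
Variables (R : realFieldType) (N : nat) (Sigma : 'M[R]_N) (mu : 'cV[R]_N) (gamma : R).

(* Node representatives are stored as vectors of R^N supported on the node's
   leaf set (zero elsewhere); then w^T Sigma_{LR} w' etc. are the full
   quadratic/bilinear forms. *)
Definition bil (x y : 'cV[R]_N) : R := (x^T *m Sigma *m y) 0 0.
Definition dotmu (x : 'cV[R]_N) : R := (x^T *m mu) 0 0.

Definition node_c (L Rt : 'cV[R]_N * R * R) : R := bil L.1.1 Rt.1.1.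
Definition node_Delta (L Rt : 'cV[R]_N * R * R) : R :=
  L.1.2 * Rt.1.2 - gamma ^+ 2 * (node_c L Rt) ^+ 2.
Definition node_alphaL_raw (L Rt : 'cV[R]_N * R * R) : R :=
  (Rt.1.2 * L.2 - gamma * node_c L Rt * Rt.2) / node_Delta L Rt.
Definition node_alphaR_raw (L Rt : 'cV[R]_N * R * R) : R :=
  (L.1.2 * Rt.2 - gamma * node_c L Rt * L.2) / node_Delta L Rt.
Definition node_Z (L Rt : 'cV[R]_N * R * R) : R :=
  `|node_alphaL_raw L Rt| + `|node_alphaR_raw L Rt|.

(* HRP-Sigma-mu: returns (w_hat, v, s).  Divisions are MathComp's total
   ones (x / 0 = 0); the theorem asserts the denominators are nonzero. *)
Fixpoint hrp (t : btree N) : 'cV[R]_N * R * R :=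
  match t with
  | Leaf i => (delta_mx i 0, Sigma i i, mu i 0)
  | Node l r =>
      let L := hrp l in let Rt := hrp r in
      let aL := node_alphaL_raw L Rt / node_Z L Rt in
      let aR := node_alphaR_raw L Rt / node_Z L Rt in
      let w := aL *: L.1.1 + aR *: Rt.1.1 in
      (w, bil w w, dotmu w)
  end.

Definition hrp_w t := (hrp t).1.1.
Definition hrp_v t := (hrp t).1.2.
Definition hrp_s t := (hrp t).2.

(* Delta and L^1 denominator Z at an internal node t (junk at leaves) *)
Definition hrp_Delta (t : btree N) : R :=
  match t with Leaf _ => 0 | Node l r => node_Delta (hrp l) (hrp r) end.
Definition hrp_Z (t : btree N) : R :=
  match t with Leaf _ => 0 | Node l r => node_Z (hrp l) (hrp r) end.
End HRP.

Definition box_vol (R : realFieldType) N (a b : 'cV[R]_N) : R :=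
  \prod_(i < N) (b i 0 - a i 0).

Definition lebesgue_null (R : realType) N (E : 'cV[R]_N -> Prop) : Prop :=
  forall eps : R, 0 < eps ->
  exists a b : nat -> 'cV[R]_N,
    (forall k i, a k i 0 <= b k i 0) /\
    (forall x, E x -> exists k, forall i, a k i 0 <= x i 0 <= b k i 0) /\
    (forall n, \sum_(k < n) box_vol (a k) (b k) <= eps).

(** Outside the coordinate hyperplanes every leaf signal [mu i] is nonzero,
    and then every internal signal is positive, by induction on the tree.
    At an internal node the raw weights are [p = M s] with
    [M = [[v_R, -gamma c]; [-gamma c, v_L]]] and [s = (s_L, s_R)], so that
    [Delta Z s_n = s^T M s].  The children's representatives are nonzero
    vectors with disjoint supports, hence linearly independent, so the strict
    Cauchy-Schwarz inequality [c^2 < v_L v_R] together with [gamma <= 1]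
    makes [Delta = det M] positive and [M] positive definite.  Hence
    [s^T M s > 0]: the raw weights do not both vanish, so [Z > 0], and
    [s_n > 0]. *)
From mathcomp Require Import all_boot all_order all_algebra.
From mathcomp Require Import reals.
From mathcomp Require Import ring lra.
Set Implicit Arguments. Unset Strict Implicit.
Import Order.TTheory GRing.Theory Num.Theory.
Local Open Scope ring_scope.

Section Forms.
Variables (R : realFieldType) (N : nat).
Implicit Types (S : 'M[R]_N) (mu x y z : 'cV[R]_N) (a b : R).

Lemma bilDl S x y z : bil S (x + y) z = bil S x z + bil S y z.
Proof. by rewrite /bil linearD /= !mulmxDl mxE. Qed.

Lemma bilZl S a x z : bil S (a *: x) z = a * bil S x z.
Proof. by rewrite /bil linearZ /= -!scalemxAl mxE. Qed.

Lemma bilDr S x y z : bil S z (x + y) = bil S z x + bil S z y.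
Proof. by rewrite /bil mulmxDr mxE. Qed.

Lemma bilZr S a x z : bil S z (a *: x) = a * bil S z x.
Proof. by rewrite /bil -scalemxAr mxE. Qed.

Lemma bilC S x y : S^T = S -> bil S x y = bil S y x.
Proof.
move=> symS; rewrite /bil -[in LHS](trmxK (x^T *m S *m y)) [LHS]mxE.
by rewrite !trmx_mul symS trmxK mulmxA.
Qed.

Lemma bil_delta S i : bil S (delta_mx i 0) (delta_mx i 0) = S i i.
Proof. by rewrite /bil trmx_delta -rowE -colE !mxE. Qed.

Lemma dotmuD mu x y : dotmu mu (x + y) = dotmu mu x + dotmu mu y.
Proof. by rewrite /dotmu linearD /= mulmxDl mxE. Qed.

Lemma dotmuZ mu a x : dotmu mu (a *: x) = a * dotmu mu x.
Proof. by rewrite /dotmu linearZ /= -scalemxAl mxE. Qed.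

Lemma dotmu0 mu : dotmu mu 0 = 0.
Proof. by rewrite /dotmu trmx0 mul0mx mxE. Qed.

Lemma dotmu_delta mu i : dotmu mu (delta_mx i 0) = mu i 0.
Proof. by rewrite /dotmu trmx_delta -rowE !mxE. Qed.

Lemma cV_neq0P x : reflect (exists j, x j 0 != 0) (x != 0).
Proof.
apply: (iffP idP) => [x_neq0 | [j]]; last by apply: contraNneq => ->; rewrite mxE.
apply/existsP; apply: contraNT x_neq0 => /existsPn x0.
by apply/eqP/matrixP => i k; rewrite ord1 mxE; apply/eqP/negbNE/x0.
Qed.

Lemma disjoint_support_indep x y a b :
  (forall j, x j 0 != 0 -> y j 0 = 0) -> x != 0 -> y != 0 ->
  a *: x + b *: y = 0 -> a = 0 /\ b = 0.
Proof.
move=> disj /cV_neq0P[j xj] /cV_neq0P[k yk] /matrixP comb0.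
have coord i : a * x i 0 + b * y i 0 = 0 by move: (comb0 i 0); rewrite !mxE.
have xk : x k 0 = 0 by apply: contraNeq yk => /disj ->.
move: (coord j) (coord k); rewrite disj // xk !mulr0 addr0 add0r.
by move=> /eqP; rewrite mulf_eq0 (negbTE xj) orbF => /eqP ->
   /eqP; rewrite mulf_eq0 (negbTE yk) orbF => /eqP ->.
Qed.

(* [bil z z = v_x (v_x v_y - c^2)] for [z = c x - v_x y], and [z != 0] by
   independence. *)
Lemma bil_sqr_lt S x y :
  sym_posdef S -> (forall a b, a *: x + b *: y = 0 -> a = 0 /\ b = 0) ->
  bil S x y ^+ 2 < bil S x x * bil S y y.
Proof.
move=> [symS posS] indep.
have x_neq0 : x != 0.
  apply/eqP=> x0; have [/eqP] : 1 = 0 :> R /\ 0 = 0 :> R.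
    by apply: indep; rewrite x0 scaler0 scale0r addr0.
  by rewrite oner_eq0.
have vx_gt0 : 0 < bil S x x by exact: posS.
have z_neq0 : bil S x y *: x + (- bil S x x) *: y != 0.
  by apply/eqP => /indep[_ /eqP]; rewrite oppr_eq0 gt_eqF.
have := posS _ z_neq0; rewrite -/(bil S _ _).
rewrite !bilDl !bilDr !bilZl !bilZr [bil S y x]bilC // => gram_gt0.
have : 0 < bil S x x * (bil S x x * bil S y y - bil S x y ^+ 2) by nra.
by rewrite pmulr_rgt0 // subr_gt0.
Qed.

End Forms.

Section NodeAlgebra.
Variable R : realFieldType.
Implicit Types g c vl vr sl sr pl pr D : R.

Lemma node_Delta_gt0 g c vl vr :
  0 <= g <= 1 -> c ^+ 2 < vl * vr -> 0 < vl * vr - g ^+ 2 * c ^+ 2.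
Proof.
move=> /andP[g0 g1] cs; suff : g ^+ 2 * c ^+ 2 <= c ^+ 2 by lra.
by rewrite ler_piMl ?sqr_ge0 // expr_le1.
Qed.

(* [s^T M s] for [M = [[vr, -g c]; [-g c, vl]]]; completing the square gives
   [vr * s^T M s = (vr sl - g c sr)^2 + det M * sr^2]. *)
Lemma node_quadratic_gt0 g c vl vr sl sr :
  0 < vr -> 0 < vl * vr - g ^+ 2 * c ^+ 2 -> sr != 0 ->
  0 < (vr * sl - g * c * sr) * sl + (vl * sr - g * c * sl) * sr.
Proof.
move=> vr_gt0 det_gt0 sr_neq0.
have square : vr * ((vr * sl - g * c * sr) * sl + (vl * sr - g * c * sl) * sr)
    = (vr * sl - g * c * sr) ^+ 2 + (vl * vr - g ^+ 2 * c ^+ 2) * sr ^+ 2.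
  by ring.
have det_sr_gt0 : 0 < (vl * vr - g ^+ 2 * c ^+ 2) * sr ^+ 2.
  by rewrite mulr_gt0 // exprn_even_gt0.
rewrite -(pmulr_rgt0 _ vr_gt0) square; have := sqr_ge0 (vr * sl - g * c * sr).
lra.
Qed.

Lemma normalized_combination_gt0 D pl pr sl sr :
  0 < D -> 0 < pl * sl + pr * sr ->
  let Z := `|pl / D| + `|pr / D| in 0 < Z /\ 0 < pl / D / Z * sl + pr / D / Z * sr.
Proof.
move=> D_gt0 comb_gt0 Z.
have Z_gt0 : 0 < Z.
  rewrite lt_def addr_ge0 // andbT; apply: contraTneq comb_gt0.
  move=> /eqP; rewrite paddr_eq0 // !normr_eq0 !mulf_eq0 !invr_eq0 (gt_eqF D_gt0).
  by rewrite !orbF => /andP[/eqP-> /eqP->]; rewrite !mul0r addr0 ltxx.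
split=> //; suff -> : pl / D / Z * sl + pr / D / Z * sr = (pl * sl + pr * sr) / (D * Z).
  by rewrite divr_gt0 ?mulr_gt0.
by field; rewrite !gt_eqF.
Qed.

End NodeAlgebra.

Section HRPTree.
Variables (R : realFieldType) (N : nat) (Sigma : 'M[R]_N) (mu : 'cV[R]_N) (gamma : R).
Hypotheses (Sigma_posdef : sym_posdef Sigma) (gamma01 : 0 <= gamma <= 1).

Local Notation w := (hrp_w Sigma mu gamma).
Local Notation s := (hrp_s Sigma mu gamma).

Lemma hrp_vE t : hrp_v Sigma mu gamma t = bil Sigma (w t) (w t).
Proof. by case: t => [i|l r] //=; rewrite bil_delta. Qed.

Lemma hrp_sE t : s t = dotmu mu (w t).
Proof. by case: t => [i|l r] //=; rewrite dotmu_delta. Qed.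

Lemma hrp_w_support t j : w t j 0 != 0 -> j \in leaves t.
Proof.
elim: t => [i | l IHl r IHr] /=.
  by rewrite mxE inE; apply: contraNT => /negbTE; rewrite eq_sym => ->.
rewrite !mxE mem_cat => wj; apply/norP => -[jl jr]; case/eqP: wj.
by rewrite (contraNeq IHl jl) (contraNeq IHr jr) !mulr0 addr0.
Qed.

Lemma hrp_w_neq0 t : s t != 0 -> w t != 0.
Proof. by rewrite hrp_sE; apply: contraNneq => ->; rewrite dotmu0. Qed.

Lemma hrp_Node_gt0 l r :
  ~~ has (mem (leaves l)) (leaves r) -> s l != 0 -> s r != 0 ->
  [/\ 0 < s (Node l r), 0 < hrp_Delta Sigma mu gamma (Node l r)
    & 0 < hrp_Z Sigma mu gamma (Node l r)].
Proof.
move=> disj sl_neq0 sr_neq0.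
have [wl_neq0 wr_neq0] := (hrp_w_neq0 sl_neq0, hrp_w_neq0 sr_neq0).
have indep a b : a *: w l + b *: w r = 0 -> a = 0 /\ b = 0.
  apply: disjoint_support_indep wl_neq0 wr_neq0 => j /hrp_w_support jl.
  by apply/eqP; apply: contraTT jl => /hrp_w_support /(hasPn disj).
have cs := bil_sqr_lt Sigma_posdef indep.
have [vl_gt0 vr_gt0] := (Sigma_posdef.2 _ wl_neq0, Sigma_posdef.2 _ wr_neq0).
move: sl_neq0 sr_neq0 (hrp_vE l) (hrp_vE r) (hrp_sE l) (hrp_sE r) vl_gt0 vr_gt0 cs.
rewrite /hrp_s /hrp_Delta /hrp_Z /hrp_v /hrp_w /=.
case: (hrp _ _ _ l) => [[wl vl] sl]; case: (hrp _ _ _ r) => [[wr vr] sr] /=.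
move=> sl_neq0 sr_neq0 vlE vrE slE srE.
rewrite -/(bil Sigma wl wl) -/(bil Sigma wr wr) -vlE -vrE => vl_gt0 vr_gt0 cs.
rewrite /node_Z /node_alphaL_raw /node_alphaR_raw /node_Delta /node_c /=.
rewrite dotmuD !dotmuZ -slE -srE; set c := bil Sigma wl wr in cs *.
have Delta_gt0 := node_Delta_gt0 gamma01 cs.
have Q_gt0 := node_quadratic_gt0 sl vr_gt0 Delta_gt0 sr_neq0.
by have [Z_gt0 s_gt0] := normalized_combination_gt0 Delta_gt0 Q_gt0.
Qed.

Lemma hrp_all_internal_gt0 t :
  (forall i, mu i 0 != 0) -> uniq (leaves t) ->
  s t != 0 /\
  all_internal (fun n => s n != 0 /\ hrp_Delta Sigma mu gamma n != 0 /\
                          0 < hrp_Z Sigma mu gamma n) t.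
Proof.
move=> mu_neq0; elim: t => [i _ | l IHl r IHr]; first by split=> //; exact: mu_neq0.
rewrite /= cat_uniq => /and3P[ul disj ur].
have [[sl_neq0 alll] [sr_neq0 allr]] := (IHl ul, IHr ur).
have [s_gt0 Delta_gt0 Z_gt0] := hrp_Node_gt0 disj sl_neq0 sr_neq0.
by rewrite !gt_eqF.
Qed.

End HRPTree.

Lemma sum_geometric_half (R : realFieldType) n :
  \sum_(k < n) 2^-1 ^+ k.+1 = 1 - 2^-1 ^+ n :> R.
Proof.
elim: n => [|n IH]; first by rewrite big_ord0 expr0 subrr.
by rewrite big_ord_recr /= IH exprS; field.
Qed.

Lemma box_vol_centered (R : realFieldType) N (h : 'cV[R]_N) :
  box_vol (- h) h = \prod_(i < N) (2 * h i 0).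
Proof. by apply: eq_bigr => i _; rewrite !mxE opprK -mulr2n mulr_natl. Qed.

Lemma lebesgue_null_geometric (R : realType) N (E : 'cV[R]_N -> Prop) :
  (forall eps : R, 0 < eps -> exists a b : nat -> 'cV[R]_N,
    [/\ forall k i, a k i 0 <= b k i 0,
        forall x, E x -> exists k, forall i, a k i 0 <= x i 0 <= b k i 0
      & forall k, box_vol (a k) (b k) <= eps * 2^-1 ^+ k.+1]) ->
  lebesgue_null E.
Proof.
move=> cover eps eps_gt0; have [a [b [ab Ecov vol]]] := cover eps eps_gt0.
exists a, b; split=> //; split=> // n.
apply: (@le_trans _ _ (\sum_(k < n) eps * 2^-1 ^+ k.+1)); first exact: ler_sum.
rewrite -mulr_sumr sum_geometric_half mulrBr mulr1 gerBl.
by rewrite mulr_ge0 ?exprn_ge0 ?invr_ge0 ?ltW.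
Qed.

(* Box [k] has half-width [delta k] in coordinate [k mod N] and [k / N] in
   the others; [delta k] is tuned so that its volume is below [eps 2^-(k+1)]. *)
Lemma lebesgue_null_coord_hyperplanes (R : realType) N : (0 < N)%N ->
  lebesgue_null (fun mu : 'cV[R]_N => exists i, mu i 0 = 0).
Proof.
move=> N_gt0; apply: lebesgue_null_geometric => eps eps_gt0.
pose axis k : 'I_N := Ordinal (ltn_pmod k N_gt0).
pose radius k : R := (k %/ N)%:R.
pose P k : R := \prod_(j < N | j != axis k) (2 * radius k).
have P_ge0 k : 0 <= P k by apply: prodr_ge0 => j _; rewrite mulr_ge0 ?ler0n.
pose delta k : R := eps * 2^-1 ^+ k.+1 / (2 * (P k + 1)).
have delta_ge0 k : 0 <= delta k.
  apply: divr_ge0; first by rewrite mulr_ge0 ?exprn_ge0 ?invr_ge0 ?ltW.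
  by rewrite mulr_ge0 ?addr_ge0.
pose h k : 'cV[R]_N := \col_j (if j == axis k then delta k else radius k).
have h_ge0 k j : 0 <= h k j 0 by rewrite mxE; case: ifP; rewrite ?ler0n.
exists (fun k => - h k), h; split.
- by move=> k i; rewrite mxE; have := h_ge0 k i; lra.
- move=> x [i xi0].
  pose m := \max_(j < N) (Num.truncn `|x j ord0|).+1.
  exists (m * N + i)%N => j; rewrite !mxE -ler_norml.
  have -> : axis (m * N + i)%N = i by apply: val_inj; rewrite /= modnMDl modn_small.
  case: eqP => [-> | _]; first by rewrite xi0 normr0.
  rewrite /radius divnMDl // divn_small // addn0.
  apply: le_trans (ltW (truncnS_gt _)) _.
  by rewrite ler_nat (@leq_bigmax _ (fun j => (Num.truncn `|x j ord0|).+1) j).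
- move=> k; rewrite box_vol_centered (bigD1 (axis k)) //=.
  have -> : \prod_(j < N | j != axis k) (2 * h k j 0) = P k.
    by apply: eq_bigr => j /negbTE axis_j; rewrite mxE axis_j.
  rewrite mxE eqxx /delta; set budget := eps * 2^-1 ^+ k.+1.
  have Pk1_gt0 : 0 < P k + 1 by have := P_ge0 k; lra.
  have -> : 2 * (budget / (2 * (P k + 1))) * P k = budget - budget / (P k + 1).
    by field; rewrite gt_eqF.
  by rewrite gerBl divr_ge0 ?mulr_ge0 ?exprn_ge0 ?invr_ge0 ?ltW.
Qed.

Lemma btree_dim_gt0 N (t : btree N) : (0 < N)%N.
Proof. by elim: t => // i; apply: leq_ltn_trans (ltn_ord i). Qed.

Unset Implicit Arguments.

Theorem mainTheorem14 (R : realType) (N : nat) (Sigma : 'M[R]_N)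
  (T : btree N) (gamma : R) :
  sym_posdef Sigma -> tree_on_assets T -> 0 <= gamma <= 1 ->
  exists E : 'cV[R]_N -> Prop, lebesgue_null E /\
    forall mu : 'cV[R]_N, ~ E mu ->
      all_internal (fun n =>
          hrp_s Sigma mu gamma n != 0 /\
          hrp_Delta Sigma mu gamma n != 0 /\
          0 < hrp_Z Sigma mu gamma n) T.
Proof.
move=> Sigma_posdef T_assets gamma01.
exists (fun mu : 'cV[R]_N => exists i, mu i 0 = 0).
split; first exact/lebesgue_null_coord_hyperplanes/(btree_dim_gt0 T).
move=> mu mu_off; have mu_neq0 i : mu i 0 != 0 by apply/eqP => mui0; apply: mu_off; exists i.
have uniqT : uniq (leaves T) by rewrite (perm_uniq T_assets) enum_uniq.
by have [] := hrp_all_internal_gt0 Sigma_posdef gamma01 mu_neq0 uniqT.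
Qed.
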